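(* There is an absolute constant $C>0$ such that the following holds. Let $U^*,S,p_{ijk},\widehat p_{ijk},\mathcal{W}_{ijk},\delta_{ijk}$ be as in the context, and let $U\in\mathbb{R}^{n\times r}$ be fixed (independent of $\delta$) with unit-norm columns and $|U_{il}|\le2\|(U^* )^i\|$ for all $i,l$. Let $\gamma\in(0,1]$, $i\in[n]$, $q\in[r]$ and $b\in\mathbb{R}^n$ be fixed. If $m\ge\frac{C}{\gamma^2}n\log(n)S^2$, then with probability at least $1-n^{-10}$, $$\Big|\sum_{j,k}\delta_{ijk}\mathcal{W}_{ijk}U^*_{iq}U_{jq}U^*_{jq}U_{kq}b_k-U^*_{iq}\langle U_q,U^*_q\rangle\langle U_q,b\rangle\Big|\le\gamma\|b\|.$$
   Context: $U^*\in\mathbb{R}^{n\times r}$ has orthonormal columns $U^*_l$ and rows $(U^* )^i$; $S=\sum_i\|(U^* )^i\|^{3/2}$; $p_{ijk}=\frac{\|(U^* )^i\|^{3/2}\|(U^* )^j\|^{3/2}+\|(U^* )^j\|^{3/2}\|(U^* )^k\|^{3/2}+\|(U^* )^k\|^{3/2}\|(U^* )^i\|^{3/2}}{3nS^2}$; $\widehat p_{ijk}=\min\{mp_{ijk},1\}$; $\mathcal{W}_{ijk}=1/\widehat p_{ijk}$ if $\widehat p_{ijk}>0$, else $0$; $\delta_{ijk}$ are independent Bernoulli$(\widehat p_{ijk})$ random variables. *)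

From Stdlib Require Import Reals List Arith.
Open Scope R_scope.

Fixpoint rsum (n : nat) (f : nat -> R) : R :=
  match n with
  | O => 0
  | S n' => rsum n' f + f n'
  end.

(* Matrices in R^{n x r} as functions of (row, column), indices 0-based. *)
Definition mat := nat -> nat -> R.

Definition rownorm (r : nat) (A : mat) (i : nat) : R :=
  sqrt (rsum r (fun l => (A i l)^2)).

(* ||A^i||^{3/2}, written as (sqrt ||A^i||)^3 (valid also at 0) *)
Definition w32 (r : nat) (A : mat) (i : nat) : R := (sqrt (rownorm r A i))^3.

Definition Sconst (n r : nat) (A : mat) : R := rsum n (fun i => w32 r A i).

Definition p_ijk (n r : nat) (A : mat) (i j k : nat) : R :=
  (w32 r A i * w32 r A j + w32 r A j * w32 r A k + w32 r A k * w32 r A i)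
  / (3 * INR n * (Sconst n r A)^2).

Definition phat (n r : nat) (A : mat) (m : R) (i j k : nat) : R :=
  Rmin (m * p_ijk n r A i j k) 1.

Definition Wt (n r : nat) (A : mat) (m : R) (i j k : nat) : R :=
  if Rlt_dec 0 (phat n r A m i j k) then / phat n r A m i j k else 0.

Definition orthonormal_cols (n r : nat) (A : mat) : Prop :=
  forall l l', (l < r)%nat -> (l' < r)%nat ->
    rsum n (fun i => A i l * A i l') = if Nat.eqb l l' then 1 else 0.

Definition unit_cols (n r : nat) (A : mat) : Prop :=
  forall l, (l < r)%nat -> rsum n (fun i => (A i l)^2) = 1.

Definition vnorm (n : nat) (b : nat -> R) : R := sqrt (rsum n (fun k => (b k)^2)).

Definition config := nat -> nat -> nat -> bool.

Definition upd (d : config) (c : nat * nat * nat) (v : bool) : config :=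
  fun a b e => let '(x, y, z) := c in
    if (Nat.eqb a x && Nat.eqb b y && Nat.eqb e z)%bool then v else d a b e.

(* Expectation of f under independent delta_c ~ Bernoulli(pr c), c in cs;
   coordinates not in cs are fixed by d. *)
Fixpoint bern_expect (pr : nat -> nat -> nat -> R) (cs : list (nat * nat * nat))
    (f : config -> R) (d : config) : R :=
  match cs with
  | nil => f d
  | c :: cs' =>
      let '(x, y, z) := c in
      pr x y z * bern_expect pr cs' f (upd d c true)
      + (1 - pr x y z) * bern_expect pr cs' f (upd d c false)
  end.

Definition coords (n : nat) : list (nat * nat * nat) :=
  list_prod (list_prod (seq 0 n) (seq 0 n)) (seq 0 n).

Definition bern_prob_le (n : nat) (pr : nat -> nat -> nat -> R)
    (X : config -> R) (t : R) : R :=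
  bern_expect pr (coords n)
    (fun d => if Rle_dec (X d) t then 1 else 0) (fun _ _ _ => false).

Definition b2R (v : bool) : R := if v then 1 else 0.

From Stdlib Require Import Reals Lra Lia List Arith.
Open Scope R_scope.

(* The error is a centred sum over the sampled slice {(i, j, k)} of independent
   inverse-probability-weighted Bernoulli terms (delta W - 1) c_jk, with
   c_jk = U*_iq U_jq U*_jq U_kq b_k. Incoherence (|U_jq| <= 2 ||U*^j||) and AM-GM give
   |c_jk| <= 4 N_ijk |b_k| and c_jk^2 <= 4 N_ijk U*_jq^2 b_k^2, where N_ijk is the
   numerator of p_ijk; wherever sampling is not certain, N_ijk <= theta phat_ijk with
   theta = 3 gamma^2 / (C log n). So each term is bounded by 4 theta ||b|| and the
   variance proxy is 4 theta ||b||^2. A Bernstein-type moment-generating-function bound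
   (e^x <= 1 + x + 2x^2 for |x| <= 1/2), factorised over the independent coordinates,
   and Chernoff's bound at lambda = 22 log n / (gamma ||b||) give failure probability
   2 n^-22 n^11 <= n^-10 for C = 1056. *)

Lemma rsum_ext n f g : (forall x, (x < n)%nat -> f x = g x) -> rsum n f = rsum n g.
Proof. induction n; simpl; intros H; auto. rewrite IHn, H; auto. Qed.

Lemma rsum_le n f g : (forall x, (x < n)%nat -> f x <= g x) -> rsum n f <= rsum n g.
Proof.
  induction n; simpl; intros H; [lra|].
  pose proof (H n (Nat.lt_succ_diag_r n)).
  pose proof (IHn (fun x Hx => H x (Nat.lt_lt_succ_r _ _ Hx))). lra.
Qed.

Lemma rsum_zero n : rsum n (fun _ => 0) = 0.
Proof. induction n; simpl; auto. rewrite IHn; ring. Qed.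

Lemma rsum_nonneg n f : (forall x, (x < n)%nat -> 0 <= f x) -> 0 <= rsum n f.
Proof. intros H. rewrite <- (rsum_zero n). apply rsum_le; auto. Qed.

Lemma rsum_term_le n f l :
  (forall x, (x < n)%nat -> 0 <= f x) -> (l < n)%nat -> f l <= rsum n f.
Proof.
  induction n; intros H Hl; [lia|]. simpl.
  assert (Hf : forall x, (x < n)%nat -> 0 <= f x) by auto.
  pose proof (rsum_nonneg n f Hf).
  destruct (Nat.eq_dec l n) as [->|Hne]; [lra|].
  pose proof (IHn Hf ltac:(lia)). pose proof (H n (Nat.lt_succ_diag_r n)). lra.
Qed.

Lemma rsum_scal n k f : k * rsum n f = rsum n (fun x => k * f x).
Proof. induction n; simpl; [ring|]. rewrite <- IHn; ring. Qed.

Lemma rsum_minus n f g : rsum n f - rsum n g = rsum n (fun x => f x - g x).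
Proof. induction n; simpl; [ring|]. rewrite <- IHn; ring. Qed.

Lemma rsum_mul n f g :
  rsum n f * rsum n g = rsum n (fun j => rsum n (fun k => f j * g k)).
Proof.
  rewrite Rmult_comm, rsum_scal. apply rsum_ext. intros.
  rewrite Rmult_comm, rsum_scal. auto.
Qed.

Lemma rsum_neq0 n f : rsum n f <> 0 -> exists x, (x < n)%nat /\ f x <> 0.
Proof.
  induction n; simpl; intros H; [lra|].
  destruct (Req_dec (f n) 0) as [E|E]; [|exists n; split; auto].
  destruct IHn as [x [Hx Hf]]; [lra|]. exists x; split; auto.
Qed.

Lemma Rabs_le_sqrt_rsum_sq n f l :
  (l < n)%nat -> Rabs (f l) <= sqrt (rsum n (fun x => f x ^ 2)).
Proof.
  intros Hl. rewrite <- sqrt_Rsqr_abs. apply sqrt_le_1_alt. unfold Rsqr.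
  replace (f l * f l) with (f l ^ 2) by ring.
  apply (rsum_term_le n (fun x => f x ^ 2)); auto. intros; apply pow2_ge_0.
Qed.

Lemma Rabs_le_1_of_rsum_sq n f l :
  rsum n (fun x => f x ^ 2) = 1 -> (l < n)%nat -> Rabs (f l) <= 1.
Proof. intros H1 Hl. rewrite <- sqrt_1, <- H1. apply Rabs_le_sqrt_rsum_sq; auto. Qed.

Fixpoint lprod {A : Type} (l : list A) (f : A -> R) : R :=
  match l with nil => 1 | c :: l' => f c * lprod l' f end.

Lemma lprod_app {A} (l1 l2 : list A) f : lprod (l1 ++ l2) f = lprod l1 f * lprod l2 f.
Proof. induction l1; simpl; [ring | rewrite IHl1; ring]. Qed.

Lemma lprod_ext {A} (l : list A) f g :
  (forall a, In a l -> f a = g a) -> lprod l f = lprod l g.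
Proof. induction l; simpl; intros H; auto. rewrite H, IHl; auto. Qed.

Lemma lprod_map {A B} (l : list A) (h : A -> B) f :
  lprod (map h l) f = lprod l (fun a => f (h a)).
Proof. induction l; simpl; auto. rewrite IHl; auto. Qed.

Lemma lprod_list_prod {A B} (l1 : list A) (l2 : list B) f :
  lprod (list_prod l1 l2) f = lprod l1 (fun a => lprod l2 (fun b => f (a, b))).
Proof. induction l1; simpl; auto. rewrite lprod_app, lprod_map, IHl1; auto. Qed.

Lemma lprod_one {A} (l : list A) : lprod l (fun _ => 1) = 1.
Proof. induction l; simpl; auto. rewrite IHl; ring. Qed.

Lemma lprod_le {A} (l : list A) f g :
  (forall a, In a l -> 0 <= f a <= g a) -> lprod l f <= lprod l g.
Proof.
  induction l; simpl; intros H; [lra|].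
  assert (Hpos : 0 <= lprod l f).
  { clear IHl. induction l; simpl; [lra|].
    apply Rmult_le_pos; [apply H; simpl; auto | apply IHl; intros; apply H; simpl in *; tauto]. }
  apply Rmult_le_compat; auto; apply H; auto.
Qed.

Lemma lprod_seq_exp n f : lprod (seq 0 n) (fun x => exp (f x)) = exp (rsum n f).
Proof.
  induction n; [simpl; rewrite exp_0; auto|].
  rewrite seq_S, lprod_app, IHn. simpl. rewrite exp_plus. ring.
Qed.

Lemma lprod_seq_indicator n i K :
  (i < n)%nat -> lprod (seq 0 n) (fun x => if Nat.eqb x i then K else 1) = K.
Proof.
  assert (Hbelow : forall n, (n <= i)%nat ->
            lprod (seq 0 n) (fun x => if Nat.eqb x i then K else 1) = 1).
  { induction n0; intros; [auto|]. rewrite seq_S, lprod_app, IHn0 by lia. simpl.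
    destruct (Nat.eqb_spec n0 i); [lia | ring]. }
  induction n; intros Hi; [lia|]. rewrite seq_S, lprod_app. simpl.
  destruct (Nat.eqb_spec n i) as [->|Hne].
  - rewrite Hbelow by lia. ring.
  - rewrite IHn by lia. ring.
Qed.

Lemma lprod_coords_row_exp n i (G : nat -> nat -> R) : (i < n)%nat ->
  lprod (coords n) (fun c : nat * nat * nat => let '(x, y, z) := c in
       if Nat.eqb x i then exp (G y z) else 1)
  = exp (rsum n (fun y => rsum n (fun z => G y z))).
Proof.
  intros Hi. unfold coords. rewrite !lprod_list_prod.
  rewrite <- (lprod_seq_indicator n i (exp (rsum n (fun y => rsum n (fun z => G y z))))) by auto.
  apply lprod_ext. intros x _. destruct (Nat.eqb x i).
  - rewrite <- lprod_seq_exp. apply lprod_ext. intros y _. apply lprod_seq_exp.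
  - rewrite (lprod_ext _ _ (fun _ => 1)); [apply lprod_one|]. intros y _. apply lprod_one.
Qed.

Lemma NoDup_list_prod {A B} (l1 : list A) (l2 : list B) :
  NoDup l1 -> NoDup l2 -> NoDup (list_prod l1 l2).
Proof.
  intros H1 H2. induction H1 as [|a l1 Ha H1 IH]; simpl; [constructor|].
  apply NoDup_app; auto.
  - apply NoDup_map_NoDup_ForallPairs; auto. intros y y' _ _ E. congruence.
  - intros p Hp Hp'. apply in_map_iff in Hp. destruct Hp as [y [<- _]].
    apply in_prod_iff in Hp'. tauto.
Qed.

Lemma coords_NoDup n : NoDup (coords n).
Proof. unfold coords. repeat apply NoDup_list_prod; apply seq_NoDup. Qed.

Definition cfg_at (d : config) (c : nat * nat * nat) : bool :=
  let '(x, y, z) := c in d x y z.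

Lemma cfg_at_upd_same d c v : cfg_at (upd d c v) c = v.
Proof. destruct c as [[x y] z]. unfold cfg_at, upd. rewrite !Nat.eqb_refl. auto. Qed.

Lemma cfg_at_upd_other d c c' v : c' <> c -> cfg_at (upd d c v) c' = cfg_at d c'.
Proof.
  destruct c as [[x y] z], c' as [[x' y'] z']. unfold cfg_at, upd. intros H.
  destruct (Nat.eqb_spec x' x), (Nat.eqb_spec y' y), (Nat.eqb_spec z' z); simpl; auto.
  subst. congruence.
Qed.

Section BernoulliExpectation.

Variable pr : nat -> nat -> nat -> R.

Lemma bern_ext cs f g d :
  (forall d, f d = g d) -> bern_expect pr cs f d = bern_expect pr cs g d.
Proof. revert d. induction cs as [|[[x y] z] cs IH]; simpl; intros; auto. rewrite !IH; auto. Qed.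

Lemma bern_lin cs k a b f g d :
  bern_expect pr cs (fun d => k + a * f d + b * g d) d =
  k + a * bern_expect pr cs f d + b * bern_expect pr cs g d.
Proof. revert d. induction cs as [|[[x y] z] cs IH]; simpl; intros; auto. rewrite !IH; ring. Qed.

Lemma bern_const cs k d : bern_expect pr cs (fun _ => k) d = k.
Proof. revert d. induction cs as [|[[x y] z] cs IH]; simpl; intros; auto. rewrite !IH; ring. Qed.

Hypothesis pr_range : forall x y z, 0 <= pr x y z <= 1.

Lemma bern_mono cs f g d :
  (forall d, f d <= g d) -> bern_expect pr cs f d <= bern_expect pr cs g d.
Proof.
  revert d. induction cs as [|[[x y] z] cs IH]; simpl; intros d H; auto.
  pose proof (pr_range x y z).
  pose proof (IH (upd d (x, y, z) true) H). pose proof (IH (upd d (x, y, z) false) H). nra.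
Qed.

Lemma bern_prod cs (h : nat * nat * nat -> bool -> R) (A : config -> R) d :
  NoDup cs -> (forall c d v, In c cs -> A (upd d c v) = A d) ->
  bern_expect pr cs (fun d => A d * lprod cs (fun c => h c (cfg_at d c))) d =
  A d * lprod cs (fun c => let '(x, y, z) := c in
                           pr x y z * h c true + (1 - pr x y z) * h c false).
Proof.
  revert A d. induction cs as [|c cs IH]; intros A d Hnd HA; [auto|].
  inversion Hnd as [|? ? Hc Hnd']; subst. destruct c as [[x y] z]. simpl.
  set (A' := fun d => A d * h (x, y, z) (cfg_at d (x, y, z))).
  assert (E : forall v, bern_expect pr cs
      (fun d0 => A d0 * (h (x, y, z) (d0 x y z) * lprod cs (fun c => h c (cfg_at d0 c))))
      (upd d (x, y, z) v)
    = A' (upd d (x, y, z) v) * lprod cs (fun c => let '(x, y, z) := c in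
                           pr x y z * h c true + (1 - pr x y z) * h c false)).
  { intros v. rewrite <- IH; auto.
    - apply bern_ext. intros d0. unfold A'. simpl. ring.
    - intros c d0 v' Hin. unfold A'. rewrite HA, cfg_at_upd_other by (simpl; auto || congruence).
      auto. }
  rewrite !E. unfold A'. rewrite !cfg_at_upd_same, !HA by (left; auto). ring.
Qed.

Lemma bern_expect_exp_row_sum_le n i (Y : nat -> nat -> bool -> R) (Q : nat -> nat -> R) s :
  (i < n)%nat ->
  (forall j k, (j < n)%nat -> (k < n)%nat ->
     pr i j k * exp (s * Y j k true) + (1 - pr i j k) * exp (s * Y j k false) <= exp (Q j k)) ->
  bern_expect pr (coords n)
    (fun d => exp (s * rsum n (fun j => rsum n (fun k => Y j k (d i j k))))) (fun _ _ _ => false)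
  <= exp (rsum n (fun j => rsum n (fun k => Q j k))).
Proof.
  intros Hi HQ.
  set (h := fun (c : nat * nat * nat) (v : bool) => let '(x, y, z) := c in
         if Nat.eqb x i then exp (s * Y y z v) else 1).
  rewrite (bern_ext _ _ (fun d => 1 * lprod (coords n) (fun c => h c (cfg_at d c)))).
  2:{ intros d. rewrite Rmult_1_l, rsum_scal.
      rewrite (rsum_ext n _ (fun j => rsum n (fun k => s * Y j k (d i j k))))
        by (intros; apply rsum_scal).
      rewrite <- (lprod_coords_row_exp n i (fun y z => s * Y y z (d i y z))) by auto.
      apply lprod_ext. intros [[x y] z] _. unfold h, cfg_at.
      destruct (Nat.eqb_spec x i); subst; auto. }
  rewrite bern_prod by (apply coords_NoDup || auto). rewrite Rmult_1_l.
  rewrite <- (lprod_coords_row_exp n i Q) by auto.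
  apply lprod_le. intros [[x y] z] Hin. unfold coords in Hin.
  apply in_prod_iff in Hin as [Hin Hz]. apply in_prod_iff in Hin as [Hx Hy].
  apply in_seq in Hy, Hz. unfold h. pose proof (pr_range x y z).
  destruct (Nat.eqb_spec x i) as [->|]; [|lra]. split.
  - pose proof (exp_pos (s * Y y z true)); pose proof (exp_pos (s * Y y z false)). nra.
  - apply HQ; lia.
Qed.

End BernoulliExpectation.

Lemma Rabs_le_inv x a : Rabs x <= a -> - a <= x <= a.
Proof. pose proof (Rle_abs x). pose proof (Rle_abs (- x)). rewrite Rabs_Ropp in *. lra. Qed.

Lemma exp_le_compat x y : x <= y -> exp x <= exp y.
Proof. intros [H|E]; [left; apply exp_increasing; auto | rewrite E; lra]. Qed.

Lemma exp_le_quadratic x : Rabs x <= 1/2 -> exp x <= 1 + x + 2 * x ^ 2.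
Proof.
  intros H. apply Rabs_le_inv in H.
  pose proof (exp_ineq1_le (- x)). pose proof (exp_pos x).
  assert (E : exp x * exp (- x) = 1) by (rewrite <- exp_plus, Rplus_opp_r; apply exp_0).
  assert (exp x * (1 - x) <= 1) by nra.
  assert (1 <= (1 - x) * (1 + x + 2 * x ^ 2)) by nra.
  nra.
Qed.

Lemma AMGM3 u v t : 0 <= u -> 0 <= v -> 0 <= t ->
  u ^ 2 * v ^ 2 * t ^ 2 <= u ^ 3 * v ^ 3 + v ^ 3 * t ^ 3 + t ^ 3 * u ^ 3.
Proof.
  intros Hu Hv Ht. set (P := u ^ 2 * v ^ 2 * t ^ 2).
  assert (H1 : 0 <= u ^ 3 * v ^ 3) by (apply Rmult_le_pos; apply pow_le; auto).
  assert (H2 : 0 <= v ^ 3 * t ^ 3) by (apply Rmult_le_pos; apply pow_le; auto).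
  assert (H3 : 0 <= t ^ 3 * u ^ 3) by (apply Rmult_le_pos; apply pow_le; auto).
  destruct (Rle_dec P (u ^ 3 * v ^ 3 + v ^ 3 * t ^ 3 + t ^ 3 * u ^ 3)) as [|Hn]; auto.
  exfalso. apply Rnot_le_lt in Hn.
  (* the three summands would each be below P, yet their product is P ^ 3 *)
  assert (A12 : (u ^ 3 * v ^ 3) * (v ^ 3 * t ^ 3) < P * P)
    by (apply Rmult_le_0_lt_compat; auto; lra).
  assert (A123 : (u ^ 3 * v ^ 3) * (v ^ 3 * t ^ 3) * (t ^ 3 * u ^ 3) < P * P * P)
    by (apply Rmult_le_0_lt_compat; auto; [apply Rmult_le_pos; auto | lra]).
  assert (E : (u ^ 3 * v ^ 3) * (v ^ 3 * t ^ 3) * (t ^ 3 * u ^ 3) = P * P * P) by (unfold P; ring).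
  lra.
Qed.

(* [Wt n r A m i j k] unfolds to [inv_or0 (phat n r A m i j k)]: a coordinate that is
   never sampled gets weight 0. *)
Definition inv_or0 (p : R) : R := if Rlt_dec 0 p then / p else 0.

Lemma ipw_bernoulli_mgf_le p c s : 0 <= p <= 1 ->
  (p = 0 -> c = 0) -> (0 < p < 1 -> Rabs (s * c) <= p / 2) ->
  p * exp (s * ((b2R true * inv_or0 p - 1) * c))
    + (1 - p) * exp (s * ((b2R false * inv_or0 p - 1) * c))
  <= exp (2 * s ^ 2 * (c ^ 2 * inv_or0 p * (1 - p))).
Proof.
  intros Hp Hc0 Hsmall. unfold b2R, inv_or0.
  destruct (Rlt_dec 0 p) as [Hpos|Hpos].
  2:{ assert (Hp0 : p = 0) by lra. rewrite Hc0, Hp0 by auto.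
      rewrite !Rmult_0_r, !Rmult_0_l, Rmult_0_r, exp_0. lra. }
  destruct (Req_dec p 1) as [->|Hne1].
  { rewrite Rinv_1, Rmult_1_r, Rminus_diag, !Rmult_0_r, !Rmult_0_l, Rmult_0_r, exp_0. lra. }
  assert (Hlt : 0 < p < 1) by lra. specialize (Hsmall Hlt).
  set (w := / p). assert (Hw : p * w = 1) by (unfold w; field; lra).
  replace (s * ((1 * w - 1) * c)) with ((s * c) * w * (1 - p)) by (unfold w; field; lra).
  replace (s * ((0 * w - 1) * c)) with (- (s * c)) by ring.
  replace (2 * s ^ 2 * (c ^ 2 * w * (1 - p))) with (2 * (s * c) ^ 2 * w * (1 - p)) by ring.
  set (a := s * c) in *. apply Rabs_le_inv in Hsmall.
  assert (Haw : - (1 / 2) <= a * w <= 1 / 2) by (unfold w in *; split; nra).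
  assert (B1 : exp (a * w * (1 - p)) <= 1 + a * w * (1 - p) + 2 * (a * w * (1 - p)) ^ 2)
    by (apply exp_le_quadratic, Rabs_le; nra).
  assert (B2 : exp (- a) <= 1 + - a + 2 * (- a) ^ 2)
    by (apply exp_le_quadratic, Rabs_le; nra).
  pose proof (exp_ineq1_le (2 * a ^ 2 * w * (1 - p))).
  assert (p * (1 + a * w * (1 - p) + 2 * (a * w * (1 - p)) ^ 2)
          + (1 - p) * (1 + - a + 2 * (- a) ^ 2) = 1 + 2 * a ^ 2 * w * (1 - p))
    by (unfold w; field; lra).
  nra.
Qed.

Lemma indicator_abs_le_ge lam z t : 0 < lam ->
  1 + - exp (- (lam * t)) * exp (lam * z) + - exp (- (lam * t)) * exp (- lam * z)
  <= (if Rle_dec (Rabs z) t then 1 else 0).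
Proof.
  intros Hlam. rewrite <- !Ropp_mult_distr_l, <- !exp_plus.
  pose proof (exp_pos (- (lam * t) + lam * z)). pose proof (exp_pos (- (lam * t) + - (lam * z))).
  destruct Rle_dec as [|Hgt]; [lra|]. apply Rnot_le_lt in Hgt.
  pose proof (exp_ineq1_le (- (lam * t) + lam * z)).
  pose proof (exp_ineq1_le (- (lam * t) + - (lam * z))).
  unfold Rabs in Hgt. destruct Rcase_abs in Hgt; nra.
Qed.

Lemma bern_prob_abs_le_chernoff n pr (Z : config -> R) t lam M :
  (forall x y z, 0 <= pr x y z <= 1) -> 0 < lam ->
  bern_expect pr (coords n) (fun d => exp (lam * Z d)) (fun _ _ _ => false) <= M ->
  bern_expect pr (coords n) (fun d => exp (- lam * Z d)) (fun _ _ _ => false) <= M ->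
  bern_prob_le n pr (fun d => Rabs (Z d)) t >= 1 - 2 * (exp (- (lam * t)) * M).
Proof.
  intros Hpr Hlam Hplus Hminus. apply Rle_ge. unfold bern_prob_le.
  eapply Rle_trans; [| apply bern_mono; [exact Hpr | intros d; exact (indicator_abs_le_ge lam (Z d) t Hlam)]].
  rewrite bern_lin. set (e := exp (- (lam * t))). assert (He : 0 <= e) by apply Rlt_le, exp_pos.
  pose proof (Rmult_le_compat_l e _ _ He Hplus). pose proof (Rmult_le_compat_l e _ _ He Hminus).
  lra.
Qed.

Lemma bern_prob_le_nonneg n pr X t :
  (forall x y z, 0 <= pr x y z <= 1) -> 0 <= bern_prob_le n pr X t.
Proof.
  intros Hpr. unfold bern_prob_le.
  eapply Rle_trans; [right; symmetry; apply (bern_const pr (coords n) 0) | apply bern_mono; auto]. intros d. destruct Rle_dec; lra.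
Qed.

Lemma bern_prob_le_sure n pr X t :
  (forall d, X d <= t) -> bern_prob_le n pr X t = 1.
Proof.
  intros H. unfold bern_prob_le. rewrite (bern_ext _ _ _ (fun _ => 1)); [apply bern_const|]. intros d. destruct Rle_dec as [|Hn]; [auto | exfalso; apply Hn, H].
Qed.

Lemma bern_prob_le_ext n pr X Y t :
  (forall d, X d = Y d) -> bern_prob_le n pr X t = bern_prob_le n pr Y t.
Proof. intros H. unfold bern_prob_le. apply bern_ext. intros d. rewrite H. reflexivity. Qed.

Definition ipw_error n i (pr : nat -> nat -> nat -> R) (c : nat -> nat -> R) (d : config) : R :=
  rsum n (fun j => rsum n (fun k => (b2R (d i j k) * inv_or0 (pr i j k) - 1) * c j k)).

Section IPWConcentration.

Variables (n i : nat) (pr : nat -> nat -> nat -> R) (c v : nat -> nat -> R) (mu : R).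

Hypothesis pr_range : forall x y z, 0 <= pr x y z <= 1.
Hypothesis i_lt_n : (i < n)%nat.
Hypothesis c_unsampled : forall j k, (j < n)%nat -> (k < n)%nat -> pr i j k = 0 -> c j k = 0.
Hypothesis c_abs_le : forall j k, (j < n)%nat -> (k < n)%nat ->
  0 < pr i j k < 1 -> Rabs (c j k) <= mu * pr i j k.
Hypothesis c_sq_le : forall j k, (j < n)%nat -> (k < n)%nat ->
  0 < pr i j k < 1 -> c j k ^ 2 <= v j k * pr i j k.
Hypothesis v_nonneg : forall j k, (j < n)%nat -> (k < n)%nat -> 0 <= v j k.

Lemma ipw_variance_term_le j k : (j < n)%nat -> (k < n)%nat ->
  c j k ^ 2 * inv_or0 (pr i j k) * (1 - pr i j k) <= v j k.
Proof.
  intros Hj Hk. pose proof (pr_range i j k). pose proof (v_nonneg j k Hj Hk).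
  unfold inv_or0. destruct (Rlt_dec 0 (pr i j k)) as [Hpos|]; [|lra].
  destruct (Req_dec (pr i j k) 1) as [E|Hne]; [rewrite E; lra|].
  pose proof (c_sq_le j k Hj Hk ltac:(lra)). pose proof (pow2_ge_0 (c j k)).
  assert (Hinv : c j k ^ 2 * / pr i j k <= v j k).
  { apply (Rmult_le_reg_r (pr i j k)); [lra|]. field_simplify; lra. }
  assert (0 <= c j k ^ 2 * / pr i j k) by (apply Rmult_le_pos; [lra | apply Rlt_le, Rinv_0_lt_compat; lra]).
  nra.
Qed.

Lemma ipw_error_mgf_le s : Rabs s * mu <= 1 / 2 ->
  bern_expect pr (coords n) (fun d => exp (s * ipw_error n i pr c d)) (fun _ _ _ => false)
  <= exp (2 * s ^ 2 * rsum n (fun j => rsum n (fun k => v j k))).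
Proof.
  intros Hs. unfold ipw_error. eapply Rle_trans.
  { apply (bern_expect_exp_row_sum_le pr pr_range n i
             (fun j k b => (b2R b * inv_or0 (pr i j k) - 1) * c j k)
             (fun j k => 2 * s ^ 2 * (c j k ^ 2 * inv_or0 (pr i j k) * (1 - pr i j k))) s i_lt_n).
    intros j k Hj Hk. apply ipw_bernoulli_mgf_le; auto.
    intros Hp. rewrite Rabs_mult. pose proof (c_abs_le j k Hj Hk Hp).
    pose proof (Rabs_pos s). pose proof (Rabs_pos (c j k)). nra. }
  apply exp_le_compat. rewrite rsum_scal. apply rsum_le. intros j Hj.
  rewrite rsum_scal. apply rsum_le. intros k Hk.
  apply Rmult_le_compat_l; [pose proof (pow2_ge_0 s); lra | apply ipw_variance_term_le; auto].
Qed.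

Theorem ipw_error_concentration lam t : 0 < lam -> lam * mu <= 1 / 2 ->
  bern_prob_le n pr (fun d => Rabs (ipw_error n i pr c d)) t
  >= 1 - 2 * exp (- (lam * t) + 2 * lam ^ 2 * rsum n (fun j => rsum n (fun k => v j k))).
Proof.
  intros Hlam Hmu. rewrite exp_plus.
  apply bern_prob_abs_le_chernoff; auto.
  - apply ipw_error_mgf_le. rewrite Rabs_right; lra.
  - replace (lam ^ 2) with ((- lam) ^ 2) by ring.
    apply ipw_error_mgf_le. rewrite Rabs_Ropp, Rabs_right; lra.
Qed.

End IPWConcentration.

Definition pnum (r : nat) (A : mat) (i j k : nat) : R :=
  w32 r A i * w32 r A j + w32 r A j * w32 r A k + w32 r A k * w32 r A i.

Lemma w32_nonneg r A x : 0 <= w32 r A x.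
Proof. apply pow_le, sqrt_pos. Qed.

Lemma pnum_nonneg r A i j k : 0 <= pnum r A i j k.
Proof.
  unfold pnum. pose proof (w32_nonneg r A i); pose proof (w32_nonneg r A j);
  pose proof (w32_nonneg r A k). nra.
Qed.

Lemma rownorm_prod_le_pnum r A i j k :
  rownorm r A i * rownorm r A j * rownorm r A k <= pnum r A i j k.
Proof.
  unfold pnum, w32. pose proof (sqrt_pos (rownorm r A i)).
  pose proof (sqrt_pos (rownorm r A j)). pose proof (sqrt_pos (rownorm r A k)).
  rewrite <- (pow2_sqrt (rownorm r A i)), <- (pow2_sqrt (rownorm r A j)),
          <- (pow2_sqrt (rownorm r A k)) at 1 by apply sqrt_pos.
  apply AMGM3; auto.
Qed.

Lemma p_ijk_nonneg n r A i j k : 0 <= p_ijk n r A i j k.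
Proof.
  unfold p_ijk. apply Rmult_le_pos; [apply pnum_nonneg|].
  set (D := 3 * INR n * Sconst n r A ^ 2).
  assert (0 <= D) by (unfold D; pose proof (pos_INR n); pose proof (pow2_ge_0 (Sconst n r A)); nra).
  destruct (Req_dec D 0) as [E|E]; [rewrite E, Rinv_0; lra|].
  apply Rlt_le, Rinv_0_lt_compat; lra.
Qed.

Lemma phat_range n r A m i j k : 0 <= m -> 0 <= phat n r A m i j k <= 1.
Proof.
  intros Hm. unfold phat. split; [|apply Rmin_r].
  apply Rmin_glb; [apply Rmult_le_pos; auto; apply p_ijk_nonneg | lra].
Qed.

Lemma phat_lt1_eq n r A m i j k : phat n r A m i j k < 1 -> phat n r A m i j k = m * p_ijk n r A i j k.
Proof.
  unfold phat. intros H. apply Rmin_left.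
  destruct (Rle_dec (m * p_ijk n r A i j k) 1) as [|Hn]; auto.
  rewrite Rmin_right in H; lra.
Qed.

Lemma pnum_le_phat n r A m K i j k : (0 < n)%nat -> 0 < Sconst n r A -> 0 < K ->
  K * INR n * Sconst n r A ^ 2 <= m -> phat n r A m i j k < 1 ->
  pnum r A i j k <= 3 / K * phat n r A m i j k.
Proof.
  intros Hn HS HK Hm Hlt. rewrite (phat_lt1_eq _ _ _ _ _ _ _ Hlt). unfold p_ijk. fold (pnum r A i j k).
  apply lt_0_INR in Hn. pose proof (pnum_nonneg r A i j k).
  assert (HD : 0 < INR n * Sconst n r A ^ 2) by (apply Rmult_lt_0_compat; [|apply pow_lt]; auto).
  replace (3 / K * (m * (pnum r A i j k / (3 * INR n * Sconst n r A ^ 2))))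
    with (pnum r A i j k * (m / (K * (INR n * Sconst n r A ^ 2)))) by (field; lra).
  rewrite <- (Rmult_1_r (pnum r A i j k)) at 1. apply Rmult_le_compat_l; auto.
  assert (HKD : 0 < K * (INR n * Sconst n r A ^ 2)) by (apply Rmult_lt_0_compat; auto).
  apply (Rmult_le_reg_r _ _ _ HKD). unfold Rdiv.
  rewrite Rmult_assoc, Rinv_l, Rmult_1_l, Rmult_1_r by lra. lra.
Qed.

Lemma phat_eq0_pnum n r A m i j k : (0 < n)%nat -> 0 < Sconst n r A -> 0 < m ->
  phat n r A m i j k = 0 -> pnum r A i j k = 0.
Proof.
  intros Hn HS Hm H0. assert (Hlt : phat n r A m i j k < 1) by lra.
  rewrite (phat_lt1_eq _ _ _ _ _ _ _ Hlt) in H0. unfold p_ijk in H0. fold (pnum r A i j k) in H0.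
  apply lt_0_INR in Hn. assert (0 < 3 * INR n * Sconst n r A ^ 2) by (pose proof (pow_lt _ 2 HS); nra).
  apply Rmult_integral in H0 as [|H0]; [lra|].
  apply Rmult_integral in H0 as [|H0]; auto. pose proof (Rinv_0_lt_compat _ H). lra.
Qed.

Definition entry_summand (Ustar U : mat) (i q : nat) (b : nat -> R) (j k : nat) : R :=
  Ustar i q * U j q * Ustar j q * U k q * b k.

Lemma sampled_entry_error_eq n r (Ustar U : mat) m i q b d :
  rsum n (fun j => rsum n (fun k =>
     b2R (d i j k) * Wt n r Ustar m i j k * Ustar i q * U j q * Ustar j q * U k q * b k))
  - Ustar i q * rsum n (fun a => U a q * Ustar a q) * rsum n (fun a => U a q * b a)
  = ipw_error n i (phat n r Ustar m) (entry_summand Ustar U i q b) d.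
Proof.
  rewrite Rmult_assoc, rsum_mul, rsum_scal, rsum_minus. apply rsum_ext. intros j _.
  rewrite rsum_scal, rsum_minus. apply rsum_ext. intros k _.
  unfold entry_summand, Wt, inv_or0. ring.
Qed.

Lemma ipw_error_zero n i pr c d :
  (forall j k, (j < n)%nat -> (k < n)%nat -> c j k = 0) -> ipw_error n i pr c d = 0.
Proof.
  intros Hc. unfold ipw_error. rewrite <- (rsum_zero n). apply rsum_ext. intros j Hj.
  rewrite <- (rsum_zero n). apply rsum_ext. intros k Hk. rewrite Hc by auto. ring.
Qed.

Lemma vnorm_eq0 n b k : vnorm n b = 0 -> (k < n)%nat -> b k = 0.
Proof.
  intros H Hk. pose proof (Rabs_le_sqrt_rsum_sq n b k Hk). fold (vnorm n b) in H0.
  pose proof (Rabs_pos (b k)). destruct (Req_dec (b k) 0) as [|Hne]; auto.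
  pose proof (Rabs_pos_lt _ Hne). lra.
Qed.

Lemma two_exp_neg11_ln_le x : 2 <= x -> 2 * exp (- (11 * ln x)) <= / x ^ 10.
Proof.
  intros Hx. replace (11 * ln x) with (ln (x ^ 11)) by (rewrite ln_pow; simpl; lra).
  rewrite exp_Ropp, exp_ln by (apply pow_lt; lra).
  assert (0 < x ^ 10) by (apply pow_lt; lra).
  replace (x ^ 11) with (x * x ^ 10) by ring. rewrite Rinv_mult.
  pose proof (Rinv_0_lt_compat _ H).
  assert (2 * / x <= 1) by (apply (Rmult_le_reg_r x); [lra|]; field_simplify; lra).
  nra.
Qed.

Section SampledEntry.

Variables (n r : nat) (Ustar U : mat) (i q : nat) (b : nat -> R).

Hypothesis Ustar_orth : orthonormal_cols n r Ustar.
Hypothesis U_unit : unit_cols n r U.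
Hypothesis U_incoherent : forall a l, (a < n)%nat -> (l < r)%nat ->
  Rabs (U a l) <= 2 * rownorm r Ustar a.
Hypothesis i_lt_n : (i < n)%nat.
Hypothesis q_lt_r : (q < r)%nat.

Lemma Ustar_col_sq : rsum n (fun x => Ustar x q ^ 2) = 1.
Proof.
  transitivity (rsum n (fun x => Ustar x q * Ustar x q)); [apply rsum_ext; intros; ring|].
  rewrite (Ustar_orth q q), Nat.eqb_refl by auto. reflexivity.
Qed.

Lemma Ustar_entry_le_rownorm x : Rabs (Ustar x q) <= rownorm r Ustar x.
Proof. apply (Rabs_le_sqrt_rsum_sq r (fun l => Ustar x l)); auto. Qed.

Lemma Ustar_entry_le_1 x : (x < n)%nat -> Rabs (Ustar x q) <= 1.
Proof. apply (Rabs_le_1_of_rsum_sq n (fun x => Ustar x q)), Ustar_col_sq. Qed.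

Lemma U_entry_le_1 x : (x < n)%nat -> Rabs (U x q) <= 1.
Proof. apply (Rabs_le_1_of_rsum_sq n (fun x => U x q)), U_unit; auto. Qed.

Lemma Sconst_pos : 0 < Sconst n r Ustar.
Proof.
  destruct (rsum_neq0 n (fun x => Ustar x q ^ 2)) as [x [Hx Hne]]; [rewrite Ustar_col_sq; lra|].
  assert (Hpos : 0 < rownorm r Ustar x).
  { pose proof (Ustar_entry_le_rownorm x).
    assert (Ustar x q <> 0) by (intros E; apply Hne; rewrite E; ring).
    pose proof (Rabs_pos_lt _ H0). lra. }
  apply Rlt_le_trans with (w32 r Ustar x).
  - apply pow_lt, sqrt_lt_R0; auto.
  - apply (rsum_term_le n (fun x => w32 r Ustar x)); auto. intros; apply w32_nonneg.
Qed.

Lemma summand_abs_le j k : (j < n)%nat -> (k < n)%nat ->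
  Rabs (entry_summand Ustar U i q b j k) <= 4 * pnum r Ustar i j k * Rabs (b k).
Proof.
  intros Hj Hk. unfold entry_summand. rewrite !Rabs_mult.
  pose proof (rownorm_prod_le_pnum r Ustar i j k).
  pose proof (Ustar_entry_le_rownorm i). pose proof (Ustar_entry_le_1 j Hj).
  pose proof (U_incoherent j q Hj q_lt_r). pose proof (U_incoherent k q Hk q_lt_r).
  set (a := rownorm r Ustar) in *.
  pose proof (Rabs_pos (Ustar i q)); pose proof (Rabs_pos (U j q));
  pose proof (Rabs_pos (Ustar j q)); pose proof (Rabs_pos (U k q)); pose proof (Rabs_pos (b k)).
  apply Rle_trans with (a i * (2 * a j) * 1 * (2 * a k) * Rabs (b k)).
  - apply Rmult_le_compat_r; auto.
    repeat apply Rmult_le_compat; auto; repeat apply Rmult_le_pos; auto.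
  - replace (a i * (2 * a j) * 1 * (2 * a k) * Rabs (b k))
      with (4 * (a i * a j * a k) * Rabs (b k)) by ring.
    apply Rmult_le_compat_r; auto. lra.
Qed.

(* Uses |U*_iq|^2 <= a_i, |U_jq|^2 <= 2 a_j, |U_kq|^2 <= 2 a_k, with a the row norms of
   U*: each entry is bounded both by 1 and by (twice) a row norm. *)
Lemma summand_sq_le j k : (j < n)%nat -> (k < n)%nat ->
  entry_summand Ustar U i q b j k ^ 2 <= 4 * pnum r Ustar i j k * (Ustar j q ^ 2 * b k ^ 2).
Proof.
  intros Hj Hk. pose proof (rownorm_prod_le_pnum r Ustar i j k).
  assert (H1 : Rabs (Ustar i q) ^ 2 <= rownorm r Ustar i).
  { pose proof (Ustar_entry_le_rownorm i); pose proof (Ustar_entry_le_1 i i_lt_n).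
    pose proof (Rabs_pos (Ustar i q)). nra. }
  assert (Hsq : forall x, (x < n)%nat -> Rabs (U x q) ^ 2 <= 2 * rownorm r Ustar x).
  { intros x Hx. pose proof (U_entry_le_1 x Hx); pose proof (U_incoherent x q Hx q_lt_r).
    pose proof (Rabs_pos (U x q)). nra. }
  set (a := rownorm r Ustar) in *.
  assert (Ha : forall x, 0 <= a x) by (intros; apply sqrt_pos).
  pose proof (Hsq j Hj) as H2. pose proof (Hsq k Hk) as H3.
  replace (entry_summand Ustar U i q b j k ^ 2) with
    (Rabs (Ustar i q) ^ 2 * Rabs (U j q) ^ 2 * Rabs (U k q) ^ 2 * (Ustar j q ^ 2 * b k ^ 2))
    by (unfold entry_summand; rewrite !pow2_abs; ring).
  assert (HX : 0 <= Ustar j q ^ 2 * b k ^ 2)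
    by (apply Rmult_le_pos; apply pow2_ge_0).
  apply Rle_trans with (a i * (2 * a j) * (2 * a k) * (Ustar j q ^ 2 * b k ^ 2)).
  - apply Rmult_le_compat_r; auto.
    apply Rmult_le_compat; [apply Rmult_le_pos; apply pow2_ge_0 | apply pow2_ge_0 | | auto].
    apply Rmult_le_compat; auto; apply pow2_ge_0.
  - pose proof (Ha i); pose proof (Ha j); pose proof (Ha k).
    replace (a i * (2 * a j) * (2 * a k)) with (4 * (a i * a j * a k)) by ring.
    apply Rmult_le_compat_r; auto. lra.
Qed.

Lemma rsum_col_sq_b_sq :
  rsum n (fun j => rsum n (fun k => Ustar j q ^ 2 * b k ^ 2)) = vnorm n b ^ 2.
Proof.
  rewrite <- rsum_mul, Ustar_col_sq, Rmult_1_l. unfold vnorm.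
  rewrite pow2_sqrt; auto. apply rsum_nonneg. intros; apply pow2_ge_0.
Qed.

Lemma summand_eq0_unsampled m j k : 0 < m -> (j < n)%nat -> (k < n)%nat ->
  phat n r Ustar m i j k = 0 -> entry_summand Ustar U i q b j k = 0.
Proof.
  intros Hm Hj Hk H0. pose proof (summand_abs_le j k Hj Hk) as Habs.
  rewrite (phat_eq0_pnum n r Ustar m i j k) in Habs; auto; [|lia | apply Sconst_pos].
  destruct (Req_dec (entry_summand Ustar U i q b j k) 0) as [|Hne]; auto.
  pose proof (Rabs_pos_lt _ Hne). lra.
Qed.

Section LargeSamplingRate.

Variables (m K : R).
Hypothesis K_pos : 0 < K.
Hypothesis m_large : K * INR n * Sconst n r Ustar ^ 2 <= m.

Lemma summand_abs_le_phat j k : (j < n)%nat -> (k < n)%nat ->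
  0 < phat n r Ustar m i j k < 1 ->
  Rabs (entry_summand Ustar U i q b j k) <= 4 * (3 / K) * vnorm n b * phat n r Ustar m i j k.
Proof.
  intros Hj Hk Hp. pose proof (summand_abs_le j k Hj Hk). pose proof (pnum_le_phat n r Ustar m K i j k ltac:(lia) Sconst_pos K_pos m_large (proj2 Hp)).
  pose proof (Rabs_le_sqrt_rsum_sq n b k Hk). fold (vnorm n b) in H1.
  pose proof (pnum_nonneg r Ustar i j k). pose proof (Rabs_pos (b k)).
  set (theta := 3 / K) in *. nra.
Qed.

Lemma summand_sq_le_phat j k : (j < n)%nat -> (k < n)%nat ->
  0 < phat n r Ustar m i j k < 1 ->
  entry_summand Ustar U i q b j k ^ 2
  <= 4 * (3 / K) * (Ustar j q ^ 2 * b k ^ 2) * phat n r Ustar m i j k.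
Proof.
  intros Hj Hk Hp. pose proof (summand_sq_le j k Hj Hk). pose proof (pnum_le_phat n r Ustar m K i j k ltac:(lia) Sconst_pos K_pos m_large (proj2 Hp)).
  assert (0 <= Ustar j q ^ 2 * b k ^ 2) by (apply Rmult_le_pos; apply pow2_ge_0).
  set (theta := 3 / K) in *. nra.
Qed.

End LargeSamplingRate.

Lemma sampled_entry_tail m gamma : 0 < gamma <= 1 -> (2 <= n)%nat -> 0 < vnorm n b ->
  1056 / gamma ^ 2 * INR n * ln (INR n) * Sconst n r Ustar ^ 2 <= m ->
  bern_prob_le n (phat n r Ustar m)
    (fun d => Rabs (ipw_error n i (phat n r Ustar m) (entry_summand Ustar U i q b) d))
    (gamma * vnorm n b)
  >= 1 - 2 * exp (- (11 * ln (INR n))).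
Proof.
  intros Hg Hn HB Hm.
  assert (HL : 0 < ln (INR n)) by (rewrite <- ln_1; apply ln_increasing; [lra | apply lt_1_INR; lia]).
  set (L := ln (INR n)) in *. set (B := vnorm n b) in *.
  set (K := 1056 / gamma ^ 2 * L).
  assert (HK : 0 < K) by (apply Rmult_lt_0_compat; [apply Rdiv_lt_0_compat, pow_lt|]; lra).
  assert (Hm' : K * INR n * Sconst n r Ustar ^ 2 <= m) by (unfold K; lra).
  assert (Hmpos : 0 < m).
  { apply Rlt_le_trans with (2 := Hm'). apply Rmult_lt_0_compat; [|apply pow_lt, Sconst_pos].
    apply Rmult_lt_0_compat; auto. apply lt_0_INR; lia. }
  eapply Rge_trans.
  { apply (ipw_error_concentration n i (phat n r Ustar m) (entry_summand Ustar U i q b)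
             (fun j k => 4 * (3 / K) * (Ustar j q ^ 2 * b k ^ 2)) (4 * (3 / K) * B))
      with (lam := 22 * L / (gamma * B)); auto.
    - intros; apply phat_range; lra.
    - intros; apply summand_eq0_unsampled with m; auto.
    - intros; apply summand_abs_le_phat; auto.
    - intros; apply summand_sq_le_phat; auto.
    - intros j k _ _. assert (0 < 3 / K) by (apply Rdiv_lt_0_compat; lra).
      assert (0 <= Ustar j q ^ 2 * b k ^ 2) by (apply Rmult_le_pos; apply pow2_ge_0). nra.
    - apply Rdiv_lt_0_compat; nra.
    - replace (22 * L / (gamma * B) * (4 * (3 / K) * B)) with (gamma / 4)
        by (unfold K; field; repeat split; lra).
      lra. }
  apply Rle_ge.
  rewrite (rsum_ext n _ (fun j => 4 * (3 / K) * rsum n (fun k => Ustar j q ^ 2 * b k ^ 2)))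
    by (intros; symmetry; apply rsum_scal).
  rewrite <- rsum_scal, rsum_col_sq_b_sq. fold B.
  (* the exponent is -22 L + 11 L *)
  replace (- (22 * L / (gamma * B) * (gamma * B)) + 2 * (22 * L / (gamma * B)) ^ 2 * (4 * (3 / K) * B ^ 2))
    with (- (11 * L)) by (unfold K; field; lra).
  lra.
Qed.

End SampledEntry.

Theorem mainTheorem6 :
  exists C : R, C > 0 /\
  forall (n r : nat) (Ustar U : mat) (m gamma : R) (i q : nat) (b : nat -> R),
    orthonormal_cols n r Ustar ->
    unit_cols n r U ->
    (forall a l, (a < n)%nat -> (l < r)%nat -> Rabs (U a l) <= 2 * rownorm r Ustar a) ->
    0 < gamma <= 1 ->
    (i < n)%nat -> (q < r)%nat ->
    m >= C / gamma^2 * INR n * ln (INR n) * (Sconst n r Ustar)^2 ->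
    bern_prob_le n (phat n r Ustar m)
      (fun d => Rabs (rsum n (fun j => rsum n (fun k =>
                   b2R (d i j k) * Wt n r Ustar m i j k
                   * Ustar i q * U j q * Ustar j q * U k q * b k))
               - Ustar i q * rsum n (fun a => U a q * Ustar a q)
                           * rsum n (fun a => U a q * b a)))
      (gamma * vnorm n b)
    >= 1 - / (INR n)^10.
Proof.
  exists 1056. split; [lra|].
  intros n r Ustar U m gamma i q b Horth Hunit Hinc Hg Hi Hq Hm.
  rewrite (bern_prob_le_ext _ _ _
    (fun d => Rabs (ipw_error n i (phat n r Ustar m) (entry_summand Ustar U i q b) d)))
    by (intros d; rewrite sampled_entry_error_eq; reflexivity).
  destruct (Nat.eq_dec n 1) as [->|Hn1].
  { replace (1 - / INR 1 ^ 10) with 0 by (simpl; field).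
    apply Rle_ge, bern_prob_le_nonneg. intros; apply phat_range.
    simpl INR in Hm. rewrite ln_1 in Hm. lra. }
  assert (Hn : (2 <= n)%nat) by lia. pose proof (le_INR _ _ Hn) as Hn'. simpl INR in Hn'.
  destruct (Req_dec (vnorm n b) 0) as [HB|HB].
  - rewrite bern_prob_le_sure.
    + pose proof (Rinv_0_lt_compat _ (pow_lt (INR n) 10 ltac:(lra))). lra.
    + intros d. rewrite ipw_error_zero, Rabs_R0, HB; [lra|].
      intros j k _ Hk. unfold entry_summand. rewrite (vnorm_eq0 n b k HB Hk). ring.
  - pose proof (sqrt_pos (rsum n (fun k => b k ^ 2))). fold (vnorm n b) in H.
    eapply Rge_trans; [apply sampled_entry_tail; auto; lra|].
    pose proof (two_exp_neg11_ln_le (INR n) Hn'). lra.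
Qed.
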